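(* If $\mu\in\Pr(\mathbb{T})$ satisfies $\mu\,\hat{}\,\mu=\mu$, then $\mu$ is $F$-invariant.
   Context: For $a,b\subseteq(0,1]$ put $a\,\hat{}\,b=\tfrac12 a\cup\tfrac12(b+1)$; $\mathbb{T}$ is the set generated from $\mathbf{1}=\{1\}$ by $\hat{}$ (the free binary system on one generator; each $t\neq\mathbf{1}$ is uniquely $a\,\hat{}\,b$). $\Pr(\mathbb{T})$ is the set of finitely additive probability measures on $\mathbb{T}$ (viewed as positive normalized functionals on $\ell^\infty(\mathbb{T})$), and $(\mu\,\hat{}\,\nu)(f)=\int\int f(x\,\hat{}\,y)\,d\nu(y)\,d\mu(x)$. Thompson's group $F$ has generators $x_0,x_1$ which act partially on $\mathbb{T}$ by re-association: $x_0\cdot((a\,\hat{}\,b)\,\hat{}\,c)=a\,\hat{}\,(b\,\hat{}\,c)$, defined exactly on elements of the form $(a\,\hat{}\,b)\,\hat{}\,c$, and $x_1\cdot(s\,\hat{}\,((a\,\hat{}\,b)\,\hat{}\,c))=s\,\hat{}\,(a\,\hat{}\,(b\,\hat{}\,c))$, defined exactly on elements of the form $s\,\hat{}\,((a\,\hat{}\,b)\,\hat{}\,c)$. For $E\subseteq\mathbb{T}$, $x_i\cdot E=\{x_i\cdot t: t\in E,\ x_i\cdot t \text{ defined}\}$. A measure $\mu\in\Pr(\mathbb{T})$ is $F$-invariant if $\mu(\{t:x_0\cdot t\text{ and }x_1\cdot t\text{ are defined}\})=1$ and $\mu(x_0\cdot E)=\mu(x_1\cdot E)=\mu(E)$ for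 every $E\subseteq\mathbb{T}$. *)

From Stdlib Require Import Reals ClassicalEpsilon.
Open Scope R_scope.

(* The free binary system on one generator: binary trees.
   [leaf] is the generator 1, [node a b] is a ^ b. *)
Inductive tree : Type :=
| leaf : tree
| node : tree -> tree -> tree.

Definition bounded_fn (f : tree -> R) : Prop :=
  exists M, forall t, Rabs (f t) <= M.

(* A finitely additive probability measure on T, viewed as a positive,
   normalized linear functional on l^infty(T). *)
Definition is_mean (mu : (tree -> R) -> R) : Prop :=
  (forall f g, bounded_fn f -> bounded_fn g ->
     mu (fun t => f t + g t) = mu f + mu g) /\
  (forall (c : R) f, bounded_fn f -> mu (fun t => c * f t) = c * mu f) /\
  (forall f, bounded_fn f -> (forall t, 0 <= f t) -> 0 <= mu f) /\
  mu (fun _ => 1) = 1.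

Definition conv (mu nu : (tree -> R) -> R) : (tree -> R) -> R :=
  fun f => mu (fun x => nu (fun y => f (node x y))).

Definition indicator (E : tree -> Prop) : tree -> R :=
  fun t => if excluded_middle_informative (E t) then 1 else 0.

Definition measure_of (mu : (tree -> R) -> R) (E : tree -> Prop) : R :=
  mu (indicator E).

(* partial actions of the generators x0, x1 of Thompson's group F *)
Definition act_x0 (t : tree) : option tree :=
  match t with
  | node (node a b) c => Some (node a (node b c))
  | _ => None
  end.

Definition act_x1 (t : tree) : option tree :=
  match t with
  | node s (node (node a b) c) => Some (node s (node a (node b c)))
  | _ => None
  end.

Definition act_set (x : tree -> option tree) (E : tree -> Prop) : tree -> Prop :=
  fun u => exists t, E t /\ x t = Some u.

Definition F_invariant (mu : (tree -> R) -> R) : Prop :=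
  measure_of mu (fun t => act_x0 t <> None /\ act_x1 t <> None) = 1 /\
  (forall E : tree -> Prop,
     measure_of mu (act_set act_x0 E) = measure_of mu E /\
     measure_of mu (act_set act_x1 E) = measure_of mu E).

From Stdlib Require Import Reals Lra FunctionalExtensionality ClassicalEpsilon.
Open Scope R_scope.

(* Idempotence μ = μ^μ, applied twice in two different ways, shows that the
   triple integrals of [g (node (node a b) c)] and of [g (node a (node b c))]
   both equal [μ g].  Since [x0] maps [(a^b)^c] to [a^(b^c)], this gives
   [μ(x0·E) = μ(E)]; the same argument under a fixed left subtree [s] gives
   invariance under [x1], and iterating the splitting shows that [μ] is carried
   by trees of the shape [(a^b)^((c^d)^e)], on which both generators act. *)

Lemma bounded_fn_node (g : tree -> R) (s : tree) :
  bounded_fn g -> bounded_fn (fun y => g (node s y)).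
Proof. intros [M HM]; exists M; auto. Qed.

Lemma bounded_fn_indicator (E : tree -> Prop) : bounded_fn (indicator E).
Proof.
  exists 1; intros t; unfold indicator.
  destruct excluded_middle_informative; [rewrite Rabs_R1 | rewrite Rabs_R0]; lra.
Qed.

Lemma indicator_iff (E1 E2 : tree -> Prop) (t1 t2 : tree) :
  (E1 t1 <-> E2 t2) -> indicator E1 t1 = indicator E2 t2.
Proof.
  intros H; unfold indicator; do 2 destruct excluded_middle_informative; tauto.
Qed.

Lemma mean_ext (mu : (tree -> R) -> R) (f g : tree -> R) :
  (forall t, f t = g t) -> mu f = mu g.
Proof. intros H; f_equal; apply functional_extensionality, H. Qed.

Section Mean.

Variable mu : (tree -> R) -> R.
Hypothesis mu_mean : is_mean mu.

Lemma mean_const (c : R) : mu (fun _ => c) = c.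
Proof.
  destruct mu_mean as (_ & mu_scale & _ & mu_one).
  rewrite (mean_ext mu _ (fun t => c * (fun _ => 1) t)) by (intros; ring).
  rewrite mu_scale, mu_one by (exists 1; intros; rewrite Rabs_R1; lra).
  ring.
Qed.

Lemma mean_const_ext (f : tree -> R) (c : R) : (forall t, f t = c) -> mu f = c.
Proof. intros H; rewrite (mean_ext mu f (fun _ => c)) by exact H; apply mean_const. Qed.

Lemma mean_le (f g : tree -> R) :
  bounded_fn f -> bounded_fn g -> (forall t, f t <= g t) -> mu f <= mu g.
Proof.
  intros Bf Bg Hfg.
  destruct mu_mean as (mu_add & mu_scale & mu_pos & _).
  assert (Bnf : bounded_fn (fun t => -1 * f t)).
  { destruct Bf as [M HM]; exists M; intros t.
    replace (-1 * f t) with (- f t) by ring; rewrite Rabs_Ropp; auto. }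
  assert (Bdiff : bounded_fn (fun t => g t + -1 * f t)).
  { destruct Bg as [Mg HMg], Bnf as [Mf HMf]; exists (Mg + Mf); intros t.
    eapply Rle_trans; [apply Rabs_triang | apply Rplus_le_compat; auto]. }
  assert (Hpos := mu_pos _ Bdiff (fun t => ltac:(specialize (Hfg t); lra))).
  rewrite mu_add, mu_scale in Hpos by assumption; lra.
Qed.

Lemma mean_abs_le (f : tree -> R) (M : R) :
  (forall t, Rabs (f t) <= M) -> Rabs (mu f) <= M.
Proof.
  intros HM.
  assert (Bf : bounded_fn f) by (exists M; exact HM).
  assert (Bc : forall c, bounded_fn (fun _ => c))
    by (intros c; exists (Rabs c); intros; lra).
  assert (Hbetween : forall t, - M <= f t <= M).
  { intros t; pose proof (Rle_abs (f t)); pose proof (Rle_abs (- f t)).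
    rewrite Rabs_Ropp in *; specialize (HM t); lra. }
  apply Rabs_le; split.
  - rewrite <- (mean_const (- M)) at 1; apply mean_le; auto; apply Hbetween.
  - rewrite <- (mean_const M); apply mean_le; auto; apply Hbetween.
Qed.

Lemma bounded_fn_mean_node (g : tree -> R) :
  bounded_fn g -> bounded_fn (fun x => mu (fun y => g (node x y))).
Proof. intros [M HM]; exists M; intros x; apply mean_abs_le; auto. Qed.

Hypothesis mu_idem : forall f : tree -> R, bounded_fn f -> conv mu mu f = mu f.

Lemma mean_split (g : tree -> R) :
  bounded_fn g -> mu g = mu (fun x => mu (fun y => g (node x y))).
Proof. intros Bg; rewrite <- (mu_idem g Bg); reflexivity. Qed.

Lemma mean_split_left (g : tree -> R) : bounded_fn g ->
  mu g = mu (fun a => mu (fun b => mu (fun c => g (node (node a b) c)))).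
Proof.
  intros Bg; rewrite (mean_split g Bg).
  exact (mean_split _ (bounded_fn_mean_node g Bg)).
Qed.

Lemma mean_split_right (g : tree -> R) : bounded_fn g ->
  mu g = mu (fun a => mu (fun b => mu (fun c => g (node a (node b c))))).
Proof.
  intros Bg; rewrite (mean_split g Bg); apply mean_ext; intros a.
  exact (mean_split _ (bounded_fn_node g a Bg)).
Qed.

Lemma mean_reassoc (g h : tree -> R) :
  bounded_fn g -> bounded_fn h ->
  (forall a b c, h (node a (node b c)) = g (node (node a b) c)) -> mu h = mu g.
Proof.
  intros Bg Bh Hhg; rewrite (mean_split_right h Bh), (mean_split_left g Bg).
  apply mean_ext; intros a; apply mean_ext; intros b; apply mean_ext; intros c.
  apply Hhg.
Qed.

Lemma measure_act_x0 (E : tree -> Prop) :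
  measure_of mu (act_set act_x0 E) = measure_of mu E.
Proof.
  apply mean_reassoc; try apply bounded_fn_indicator.
  intros a b c; apply indicator_iff; split.
  - intros [[|[|t1 t2] t3] [Ht Hx]]; try discriminate.
    now injection Hx as -> -> ->.
  - intros H; now exists (node (node a b) c).
Qed.

Lemma measure_act_x1 (E : tree -> Prop) :
  measure_of mu (act_set act_x1 E) = measure_of mu E.
Proof.
  unfold measure_of.
  rewrite (mean_split _ (bounded_fn_indicator _)), (mean_split _ (bounded_fn_indicator E)).
  apply mean_ext; intros s.
  apply mean_reassoc; try apply bounded_fn_node, bounded_fn_indicator.
  intros a b c; apply indicator_iff; split.
  - intros [[|t0 [|[|t1 t2] t3]] [Ht Hx]]; try discriminate.
    now injection Hx as -> -> -> ->.
  - intros H; now exists (node s (node (node a b) c)).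
Qed.

Lemma measure_x0_x1_defined :
  measure_of mu (fun t => act_x0 t <> None /\ act_x1 t <> None) = 1.
Proof.
  set (S := fun t => act_x0 t <> None /\ act_x1 t <> None).
  unfold measure_of; rewrite (mean_split_left _ (bounded_fn_indicator S)).
  apply mean_const_ext; intros a; apply mean_const_ext; intros b.
  rewrite (mean_split_left _ (bounded_fn_node _ _ (bounded_fn_indicator S))).
  apply mean_const_ext; intros c; apply mean_const_ext; intros d.
  apply mean_const_ext; intros e.
  unfold indicator; destruct excluded_middle_informative as [|HnS]; [reflexivity|].
  exfalso; apply HnS; split; discriminate.
Qed.

End Mean.

Theorem proposition3p3 (mu : (tree -> R) -> R) :
  is_mean mu ->
  (forall f : tree -> R, bounded_fn f -> conv mu mu f = mu f) ->
  F_invariant mu.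
Proof.
  intros mu_mean mu_idem; split.
  - exact (measure_x0_x1_defined mu mu_mean mu_idem).
  - intros E; split.
    + exact (measure_act_x0 mu mu_mean mu_idem E).
    + exact (measure_act_x1 mu mu_mean mu_idem E).
Qed.
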